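(* Let $Q$ be a sequence, $G=(V,E,\delta)$ a pangenome graph, and $\mathcal{M}$ a finite set of maximal exact matches (MEMs) between $Q$ and $G$. Let $H_{MEM}$ be the vertex-weighted directed graph with vertex set $\{v^m: m\in\mathcal{M}\}$, an edge from $v^m$ to $v^{m'}$ if and only if $m\prec m'$ (for $m,m'\in\mathcal{M}$), and vertex weights $W(v^m)=|m_1|$. If $v^{m^1},\dots,v^{m^k}$ is a directed path in $H_{MEM}$ maximizing the sum of vertex weights among all directed paths in $H_{MEM}$, then $\mathcal{M}'=\{m^1,\dots,m^k\}$ is a strictly ordered subset of $\mathcal{M}$ and $len(\mathcal{M}')$ is maximum among all strictly ordered subsets of $\mathcal{M}$.
   Context: Strings are 0-indexed; $S_i$ is the character of $S$ at position $i$ and $S[i,\dots,j]$ the substring from $i$ to $j$ inclusive. A pangenome graph is a triple $G=(V,E,\delta)$ where $(V,E)$ is a finite directed graph and $\delta:V\to\Sigma^*\setminus\{\epsilon\}$ assigns a nonempty string to each vertex. A path in $G$ is a sequence of vertices $w_0,\dots,w_k$ with $(w_j,w_{j+1})\in E$ for all $j<k$; $u$ reaches $v$ if there is a path from $u$ to $v$. A match (seed) between $Q$ and $G$ is a triple $m=(v,[i,\dots,i'],[j,\dots,j'])$ with $v\in V$ and $\delta(v)[i,\dots,i']=Q[j,\dots,j']$; write $m_0=v$, $m_1=[i,\dots,i']$, $m_2=[j,\dots,j']$, and $|m_1|=i'-i+1=|m_2|$. It is left-maximal if $i=0$ or $j=0$ or $\delta(v)_{i-1}\ne Q_{j-1}$,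 right-maximal if $i'=|\delta(v)|-1$ or $j'=|Q|-1$ or $\delta(v)_{i'+1}\ne Q_{j'+1}$, and a MEM if both. For seeds $s=(v_1,[i_1,\dots,i_1'],[j_1,\dots,j_1'])$ and $t=(v_2,[i_2,\dots,i_2'],[j_2,\dots,j_2'])$, $s\prec t$ (strictly ordered) means $j_1'<j_2$ and: if $v_1=v_2$ then $i_1'<i_2$; if $v_1\ne v_2$ then $v_1$ reaches $v_2$ in $G$. A subset $\mathcal{M}'$ of seeds is strictly ordered if its elements can be listed as $m^1,\dots,m^k$ with $m^l\prec m^{l+1}$ for all $1\le l<k$. $len(\mathcal{M}')=\sum_{m\in\mathcal{M}'}|m_1|$. *)

From mathcomp Require Import all_boot.
Set Implicit Arguments. Unset Strict Implicit. Unset Printing Implicit Defensive.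

Section Pangenome.
Variables (Sigma : finType) (V : finType).

(* A pangenome graph (V, E, delta): E : rel V, delta v nonempty (hypothesis
   stated in the theorem).  Strings are seq Sigma, 0-indexed via nth. *)

(* A seed/match m = (v, [i..i'], [j..j']) is encoded as (v, (i, i'), (j, j')). *)
Definition seed := (V * (nat * nat) * (nat * nat))%type.

Definition m0 (m : seed) : V := m.1.1.
Definition m1 (m : seed) : nat * nat := m.1.2.
Definition m2 (m : seed) : nat * nat := m.2.

Definition len1 (m : seed) : nat := ((m1 m).2 - (m1 m).1).+1.

Variable x0 : Sigma. (* default for nth; irrelevant for in-range indices *)

Definition is_match (delta : V -> seq Sigma) (Q : seq Sigma) (m : seed) : Prop :=
  let: (v, (i, i'), (j, j')) := m in
  [/\ i <= i' < size (delta v), j <= j' < size Q, i' - i = j' - j &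
      forall t, t <= i' - i -> nth x0 (delta v) (i + t) = nth x0 Q (j + t)].

Definition left_maximal (delta : V -> seq Sigma) (Q : seq Sigma) (m : seed) : Prop :=
  let: (v, (i, i'), (j, j')) := m in
  i = 0 \/ j = 0 \/ nth x0 (delta v) i.-1 <> nth x0 Q j.-1.

Definition right_maximal (delta : V -> seq Sigma) (Q : seq Sigma) (m : seed) : Prop :=
  let: (v, (i, i'), (j, j')) := m in
  i' = (size (delta v)).-1 \/ j' = (size Q).-1 \/
  nth x0 (delta v) i'.+1 <> nth x0 Q j'.+1.

Definition is_MEM delta Q m : Prop :=
  [/\ is_match delta Q m, left_maximal delta Q m & right_maximal delta Q m].

Definition reaches (E : rel V) (u v : V) : bool := connect E u v.

Definition prec (E : rel V) (s t : seed) : bool :=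
  ((m2 s).2 < (m2 t).1) &&
  (if m0 s == m0 t then (m1 s).2 < (m1 t).1 else reaches E (m0 s) (m0 t)).

(* Finite sets of seeds are duplicate-free sequences. *)
Definition strictly_ordered (E : rel V) (N : seq seed) : Prop :=
  exists s : seq seed, perm_eq s N /\ sorted (prec E) s.

Definition len (N : seq seed) : nat := \sum_(m <- N) len1 m.

(* Directed path v^{m^1} .. v^{m^k} (k >= 1) in H_MEM: consecutive vertices
   joined by an edge, i.e. m^l \prec m^{l+1}. *)
Definition HMEM_path (E : rel V) (M p : seq seed) : Prop :=
  [/\ p != [::], all (mem M) p & sorted (prec E) p].

Definition path_weight (p : seq seed) : nat := \sum_(m <- p) len1 m.

End Pangenome.

From mathcomp Require Import all_boot.

(* A MEM occupies a nonempty interval of Q, so [s \prec t] forces the query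
   interval of [s] to start strictly before that of [t]. Hence a path of
   H_MEM never repeats a seed and is itself a strictly ordered listing of its
   vertex set, with weight equal to [len]. Conversely, listing a strictly
   ordered subset of M in order gives a path of H_MEM of weight [len], so a
   maximum-weight path dominates it. *)

Lemma is_match_query_le (Sigma : finType) (x0 : Sigma) (V : finType)
    (delta : V -> seq Sigma) (Q : seq Sigma) (m : seed V) :
  is_match x0 delta Q m -> (m2 m).1 <= (m2 m).2.
Proof. by case: m => [[v [i i']] [j j']] [_ /andP[]]. Qed.

Section StrictOrder.
Variables (V : finType) (E : rel V).

Lemma prec_query_start_lt (s t : seed V) :
  (m2 s).1 <= (m2 s).2 -> prec E s t -> (m2 s).1 < (m2 t).1.
Proof. by move=> le_s /andP[lt_st _]; exact: leq_ltn_trans lt_st. Qed.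

Lemma sorted_prec_uniq (s : seq (seed V)) :
  {in s, forall m, (m2 m).1 <= (m2 m).2} -> sorted (prec E) s -> uniq s.
Proof.
move=> le_s sorted_s.
apply: (map_uniq (f := fun m => (m2 m).1)).
apply: (sorted_uniq ltn_trans ltnn); rewrite sorted_map.
apply: (sub_in_sorted (P := mem s)) (allss s) sorted_s => a b a_s _.
exact/prec_query_start_lt/le_s.
Qed.

Lemma strictly_ordered_sorted (s : seq (seed V)) :
  sorted (prec E) s -> strictly_ordered E s.
Proof. by exists s. Qed.

Lemma strictly_ordered_len_le (M p : seq (seed V)) :
  (forall p', HMEM_path E M p' -> path_weight p' <= path_weight p) ->
  forall N, {subset N <= M} -> strictly_ordered E N -> len N <= path_weight p.
Proof.
move=> p_max N NM [s [perm_sN sorted_s]].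
rewrite /len -(perm_big _ perm_sN).
case: s perm_sN sorted_s => [|a s] perm_sN sorted_s; first by rewrite big_nil.
apply: p_max; split=> //.
by apply/allP => m m_s; apply: NM; rewrite -(perm_mem perm_sN).
Qed.

End StrictOrder.

Theorem theorem4 (Sigma : finType) (x0 : Sigma) (V : finType) (E : rel V)
    (delta : V -> seq Sigma) (Q : seq Sigma) (M : seq (seed V)) (p : seq (seed V)) :
  (forall v, delta v != [::]) ->
  uniq M ->
  (forall m, m \in M -> is_MEM x0 delta Q m) ->
  HMEM_path E M p ->
  (forall p' : seq (seed V), HMEM_path E M p' -> path_weight p' <= path_weight p) ->
  strictly_ordered E (undup p) /\
  (forall N : seq (seed V), uniq N -> {subset N <= M} -> strictly_ordered E N ->
     len N <= len (undup p)).
Proof.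
move=> _ _ MEM_M [_ pM sorted_p] p_max.
have uniq_p : uniq p.
  apply: sorted_prec_uniq sorted_p => m /(allP pM) /MEM_M [match_m _ _].
  exact: is_match_query_le match_m.
rewrite undup_id //; split; first exact: strictly_ordered_sorted.
by move=> N _; exact: strictly_ordered_len_le.
Qed.
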